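(* Let $n\ge 2$ be an integer such that $n+1$ is an odd prime. If $[\delta_0,\dots,\delta_n]\in\{-1,1\}^{n+1}$ satisfies $\sum_{j=0}^n\delta_j\binom{n}{j}=0$, then either $\delta_j=(-1)^j$ for all $j$ or $\delta_j=-(-1)^j$ for all $j$. Equivalently, $\hat J_n=0$.
   Context: For even $n$, $\hat J_n$ is the number of vectors $(\epsilon_0,\dots,\epsilon_{n/2-1})\in\{-1,0,1\}^{n/2}$ with $\sum_{i=0}^{n/2-1}\epsilon_i\binom{n}{i}=(-1)^{n/2+1}\frac12\binom{n}{n/2}$, excluding the alternating vector $\epsilon_i=(-1)^i$. *)

From mathcomp Require Import all_boot all_order all_algebra.
Set Implicit Arguments. Unset Strict Implicit. Unset Printing Implicit Defensive.

(* Since n + 1 = p is prime, C(p-1, j) = (-1)^j mod p, so the vanishing sum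
   forces p to divide sum_j delta_j (-1)^j = 2a - p, where a counts the j with
   delta_j = (-1)^j.  As p is odd, p divides a. *)
From mathcomp Require Import all_boot all_order all_algebra.
From mathcomp Require Import ring.
Import GRing.Theory Num.Theory.
Local Open Scope ring_scope.

Lemma dvdz_bin_pred_prime (n j : nat) : prime n.+1 -> (j <= n)%N ->
  (n.+1%:Z %| 'C(n, j)%:Z - (-1) ^+ j)%Z.
Proof.
move=> p_pr; elim: j => [|j IHj] le_jn; first by rewrite bin0 expr0 subrr dvdz0.
have -> : 'C(n, j.+1)%:Z - (-1) ^+ j.+1 = 'C(n.+1, j.+1)%:Z - ('C(n, j)%:Z - (-1) ^+ j).
  by rewrite binS PoszD exprS; ring.
apply: rpredB; last exact/IHj/ltnW.
by rewrite dvdzE; apply: prime_dvd_bin.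
Qed.

Lemma sign_pm1 (j : nat) : (-1) ^+ j = 1 :> int \/ (-1) ^+ j = -1 :> int.
Proof. by rewrite -signr_odd; case: (odd j); [right | left]. Qed.

Lemma pm1_neq_opp {x s : int} : (x = 1 \/ x = -1) -> (s = 1 \/ s = -1) ->
  x != s -> x = - s.
Proof. by move=> [] -> [] ->. Qed.

Lemma sum_pm1_mul {I : finType} {x s : I -> int} :
  (forall i, x i = 1 \/ x i = -1) -> (forall i, s i = 1 \/ s i = -1) ->
  \sum_i x i * s i = 2 * #|[set i | x i == s i]|%:Z - #|I|%:Z.
Proof.
move=> x_pm1 s_pm1; set A := [set i | x i == s i].
rewrite (bigID (mem A)) /= (eq_bigr (fun=> 1)) => [|i]; last first.
  by rewrite inE => /eqP ->; case: (s_pm1 i) => ->.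
rewrite [X in _ + X](eq_bigr (fun=> -1)) => [|i]; last first.
  by rewrite inE => /(pm1_neq_opp (x_pm1 i) (s_pm1 i)) ->; case: (s_pm1 i) => ->.
have cardAC : #|[pred i | i \notin A]| = #|~: A| by apply: eq_card => i; rewrite !inE.
rewrite !sumr_const cardAC -(cardsC A) mulNrn !natz PoszD; ring.
Qed.

Lemma dvdz_double_sub_prime {p a : nat} : prime p -> odd p -> (a <= p)%N ->
  (p%:Z %| 2 * a%:Z - p%:Z)%Z -> a = 0%N \/ a = p.
Proof.
move=> p_pr p_odd le_ap dvd_p.
have : (p%:Z %| (2 * a)%N%:Z)%Z.
  by rewrite PoszM -[_ * _](subrK p%:Z); apply: rpredD.
rewrite dvdzE /= Gauss_dvdr ?coprimen2 // => dvd_pa {dvd_p}.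
case: a le_ap dvd_pa => [|a] le_ap dvd_pa; first by left.
by right; apply/eqP; rewrite eqn_leq le_ap dvdn_leq.
Qed.

Theorem mainTheorem4 (n : nat) (hn : (2 <= n)%N) (hp : prime n.+1) (hodd : odd n.+1)
  (delta : 'I_n.+1 -> int)
  (hd : forall j, delta j = 1 \/ delta j = -1)
  (hsum : \sum_(j < n.+1) delta j * ('C(n, j))%:Z = 0) :
  (forall j : 'I_n.+1, delta j = (-1) ^+ j) \/
  (forall j : 'I_n.+1, delta j = - (-1) ^+ j).
Proof.
set A := [set j : 'I_n.+1 | delta j == (-1) ^+ j].
have dvd_sum : (n.+1%:Z %| \sum_(j < n.+1) delta j * (-1) ^+ j)%Z.
  have -> : \sum_(j < n.+1) delta j * (-1) ^+ j = \sum_(j < n.+1) delta j * 'C(n, j)%:Z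
      - \sum_(j < n.+1) delta j * ('C(n, j)%:Z - (-1) ^+ j).
    by rewrite -sumrB; apply: eq_bigr => j _; ring.
  rewrite hsum sub0r rpredN; apply: rpred_sum => j _.
  by apply/dvdz_mull/dvdz_bin_pred_prime => //; rewrite -ltnS.
rewrite (sum_pm1_mul hd (fun j => sign_pm1 j)) card_ord -/A in dvd_sum.
have le_A : (#|A| <= n.+1)%N by have := max_card A; rewrite card_ord.
have [A0 | AT] := dvdz_double_sub_prime hp hodd le_A dvd_sum.
- right => j; apply: (pm1_neq_opp (hd j) (sign_pm1 j)).
  by have := cards0_eq A0; move/setP/(_ j); rewrite !inE => ->.
- left => j; apply/eqP.
  have : A = setT by apply/eqP; rewrite eqEcard subsetT cardsT card_ord AT /=.
  by move/setP/(_ j); rewrite !inE => ->.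
Qed.
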